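(* Let $c>0$ and $m>0$ be constants and let $f:\mathbb{Z}\to\mathbb{Z}$ be a non-decreasing map such that $f(j)-f(i)\le j-i$ for all integers $i<j$, and $f(j)-f(i)\ge c\,(j-i)$ for all integers $i,j$ with $i+m\le j$. Let $B$ be an integer-valued random variable with $0<\mathrm{Var}(B)<\infty$. Then $$\mathrm{Var}(f(B))\ \ge\ c^2\left(1-\frac{2m}{c\sqrt{\mathrm{Var}(B)}}\right)\mathrm{Var}(B).$$ *)

From HB Require Import structures.
From mathcomp Require Import all_boot all_order all_algebra.
From mathcomp Require Import all_classical all_reals all_analysis.
Set Implicit Arguments. Unset Strict Implicit. Unset Printing Implicit Defensive.

From HB Require Import structures.
From mathcomp Require Import all_boot all_order all_algebra.
From mathcomp Require Import all_classical all_reals all_analysis.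
From mathcomp Require Import measurable_realfun ring lra zify.
(* Let a := E f(B). Since f increases by at most one per step, some step of f
   from t to t + 1 has f(t) <= a < f(t) + 1; placing s suitably in [t, t + 1],
   the growth bound at scale m gives |f(x) - a| >= c (|x - s| - m) for every
   integer x. Squaring and using 2 m |y| <= (m / sigma) y^2 + m sigma, where
   sigma is the standard deviation of B, gives
   (f(x) - a)^2 >= c^2 (1 - m / sigma) (x - s)^2 - c^2 m sigma.
   Taking expectations, E (B - s)^2 >= Var B yields
   Var f(B) >= c^2 Var B - 2 c^2 m sigma >= c^2 Var B - 2 c m sigma, as c <= 1. *)

Set Implicit Arguments.
Unset Strict Implicit.
Unset Printing Implicit Defensive.
Import Order.TTheory GRing.Theory Num.Theory.
Local Open Scope ring_scope.

Lemma int_crossing (R : realDomainType) (g : int -> R) (a : R) (k : nat) (n : int) :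
  g n <= a -> a < g (n + k%:Z) -> exists t, g t <= a < g (t + 1).
Proof.
elim: k n => [|k IHk] n gna agnk; first by move: agnk; rewrite addr0; lra.
have [gn1a|agn1] := leP (g (n + 1)) a; last by exists n; apply/andP.
by apply: (IHk (n + 1)) => //; rewrite -addrA -intS.
Qed.

Section lipschitz_growth.
Variables (R : realType) (c m : R) (f : int -> int).
Hypotheses (c_gt0 : 0 < c) (m_gt0 : 0 < m).
Hypothesis f_nondecr : {homo f : i j / i <= j}.
Hypothesis f_lip : forall i j : int, i < j -> f j - f i <= j - i.
Hypothesis f_growth : forall i j : int, i%:~R + m <= j%:~R ->
  c * (j - i)%:~R <= (f j - f i)%:~R.

Lemma growth_le1 : c <= 1.
Proof.
have [N mN] : exists N : nat, m < N%:R.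
  by exists (Num.truncn m).+1; exact: truncnS_gt.
have := @f_growth 0 N; rewrite subr0 mulr0z add0r -pmulrn => /(_ (ltW mN)) cN.
have : (f N - f 0)%:~R <= N%:R :> R.
  rewrite pmulrn ler_int; have := @f_lip 0 N; rewrite subr0; apply.
  by rewrite ltz_nat -(ltr0n R) (lt_trans m_gt0 mN).
have := m_gt0; nra.
Qed.

Lemma growth_bracket (a : R) :
  exists N : nat, (f (- N%:Z))%:~R <= a /\ a < (f N)%:~R.
Proof.
set q := (`|a| + `|(f 0)%:~R|) / c.
have q_ge0 : 0 <= q by rewrite divr_ge0 // ?addr_ge0 // ltW.
have cq : c * q = `|a| + `|(f 0)%:~R| by rewrite mulrC divfK // gt_eqF.
have [N mqN] : exists N : nat, m + q < N%:R.
  by exists (Num.truncn (m + q)).+1; exact: truncnS_gt.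
have := @f_growth 0 N; rewrite subr0 mulr0z add0r -pmulrn intrB.
move=> /(_ ltac:(lra)) upper.
have := @f_growth (- N%:Z) 0; rewrite sub0r opprK intrN -pmulrn intrB.
move=> /(_ ltac:(lra)) lower.
have cN : `|a| + `|(f 0)%:~R| < c * N%:R.
  by rewrite -cq ltr_pM2l //; have := m_gt0; lra.
have := ler_norm a; have := ler_norm (- a); rewrite normrN.
have := ler_norm ((f 0)%:~R : R); have := ler_norm (- (f 0)%:~R : R); rewrite normrN.
by exists N; split; lra.
Qed.

Lemma exists_unit_step (a : R) :
  exists t, (f t)%:~R <= a < (f t)%:~R + 1 /\ f (t + 1) = f t + 1.
Proof.
have [N [lo hi]] := growth_bracket a.
have [t /andP[fta aft1]] : exists t, (f t)%:~R <= a < (f (t + 1))%:~R.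
  apply: (@int_crossing R (fun i => (f i)%:~R) a (N + N)%N _ lo).
  by rewrite PoszD addrA addNr add0r.
have step : f (t + 1) = f t + 1.
  have : f t < f (t + 1) by rewrite -(ltr_int R); lra.
  have := @f_lip t (t + 1) ltac:(lia); lia.
by exists t; rewrite fta -[_ + 1]intrD1 -step aft1.
Qed.

Lemma exists_level_preimage (a : R) :
  exists s : R, forall x : int, c * (`|x%:~R - s| - m) <= `|(f x)%:~R - a|.
Proof.
have c_le1 := growth_le1; have c0 := c_gt0; have m0 := m_gt0.
have [t [/andP[fta aft1] step]] := exists_unit_step a.
move: fta aft1; set ft : R := (f t)%:~R; set tr : R := t%:~R => fta aft1.
have [th [th_ge0 th_le1 th_lo th_hi]] : exists th,
    [/\ 0 <= th, th <= 1, c * (1 - th) <= ft + 1 - a & c * th <= a - ft].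
  have [c_le|c_gt] := leP c (ft + 1 - a).
    by exists 0; rewrite mulr0 subr0 mulr1; split; lra.
  set q := (ft + 1 - a) / c; exists (1 - q).
  have cq : c * q = ft + 1 - a by rewrite mulrC divfK // gt_eqF.
  have q_lt1 : q < 1 by rewrite ltr_pdivrMr // mul1r.
  have q_ge0 : 0 <= q by rewrite divr_ge0 // ?ltW //; lra.
  by rewrite opprB addrCA subrr addr0 mulrBr mulr1 cq; split; lra.
exists (tr + th) => x; set fx : R := (f x)%:~R; set xr : R := x%:~R.
have [tx|xt] := ltP t x.
- have tx1 : tr + 1 <= xr by rewrite /tr /xr -intrD1 ler_int; lia.
  have ftx : ft + 1 <= fx by rewrite /ft /fx -intrD1 -step ler_int f_nondecr //; lia.
  rewrite !ger0_norm; [|lra|lra].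
  have [far|near] := leP ((t + 1)%:~R + m) xr.
    have := f_growth far; rewrite step !intrB !intrD1 -/fx -/xr -/ft -/tr.
    nra.
  rewrite intrD1 -/tr in near; nra.
- have xt' : xr <= tr by rewrite ler_int.
  have fxt : fx <= ft by rewrite ler_int f_nondecr.
  rewrite !ler0_norm; [|lra|lra].
  have [far|near] := leP (xr + m) tr.
    have := f_growth far; rewrite !intrB -/fx -/xr -/ft -/tr.
    nra.
  nra.
Qed.
End lipschitz_growth.

Lemma sqr_ge_of_norm_shift (R : realFieldType) (c m y z sigma : R) :
  0 <= c -> 0 <= m -> 0 < sigma -> c * (`|y| - m) <= `|z| ->
  c ^+ 2 * (1 - m / sigma) * y ^+ 2 <= z ^+ 2 + c ^+ 2 * m * sigma.
Proof.
move=> c_ge0 m_ge0 sigma_gt0 hyz.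
have y2 : y ^+ 2 = `|y| ^+ 2 by rewrite real_normK ?num_real.
have z2 : z ^+ 2 = `|z| ^+ 2 by rewrite real_normK ?num_real.
have ny := normr_ge0 y.
have sq : c ^+ 2 * (y ^+ 2 - 2 * m * `|y|) <= z ^+ 2.
  rewrite y2 z2; have [m_le|y_lt] := leP m `|y|; last first.
    by apply: le_trans (sqr_ge0 _) ; apply: mulr_ge0_le0; [exact: sqr_ge0|nra].
  have cy : 0 <= c * (`|y| - m) by apply: mulr_ge0; lra.
  have : (c * (`|y| - m)) ^+ 2 <= `|z| ^+ 2 by rewrite ler_sqr ?nnegrE.
  by apply: le_trans; rewrite exprMn ler_wpM2l ?sqr_ge0 //; nra.
have amgm : 2 * m * `|y| <= m / sigma * y ^+ 2 + m * sigma.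
  have : 0 <= m / sigma * (`|y| - sigma) ^+ 2.
    by apply: mulr_ge0; [apply: divr_ge0; lra | exact: sqr_ge0].
  have -> : m / sigma * (`|y| - sigma) ^+ 2 = m / sigma * y ^+ 2 + m * sigma - 2 * m * `|y|.
    by rewrite y2; field; rewrite gt_eqF.
  lra.
have := ler_wpM2l (sqr_ge0 c) amgm; nra.
Qed.

Lemma le_shifted_variance_bound (R : realFieldType) (c m sigma : R) :
  0 < c -> c <= 1 -> 0 < m -> 0 < sigma ->
  c ^+ 2 * (1 - 2 * m / (c * sigma)) * sigma ^+ 2
    <= c ^+ 2 * (1 - m / sigma) * sigma ^+ 2 - c ^+ 2 * m * sigma.
Proof.
move=> c_gt0 c_le1 m_gt0 sigma_gt0.
have -> : c ^+ 2 * (1 - 2 * m / (c * sigma)) * sigma ^+ 2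
    = c ^+ 2 * sigma ^+ 2 - 2 * c * m * sigma by field; rewrite !gt_eqF.
have -> : c ^+ 2 * (1 - m / sigma) * sigma ^+ 2 - c ^+ 2 * m * sigma
    = c ^+ 2 * sigma ^+ 2 - 2 * c ^+ 2 * m * sigma by field; rewrite gt_eqF.
have : 0 <= c * m * sigma * (1 - c) by rewrite !mulr_ge0 ?subr_ge0 // ltW.
nra.
Qed.

Section finite_variance.
Local Open Scope ereal_scope.
Context d (T : measurableType d) (R : realType) (P : probability T R).

Lemma variance_lty_Lfun2 (X : T -> R) :
  measurable_fun setT X -> 'V_P[X] < +oo -> X \in Lfun P 2%:E.
Proof.
move=> mX VX.
set mu := fine 'E_P[X].
have mD : measurable_fun setT (X \- cst mu)%R.
  by apply: measurable_funB => //; exact: measurable_cst.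
have D2 : (X \- cst mu)%R \in Lfun P 2%:E.
  rewrite inE; apply/andP; split; rewrite inE //=.
  rewrite /finite_norm (@lty_poweRy _ _ 2%R) // powR_Lnorm //.
  rewrite (le_lt_trans _ VX) // /variance covariance.unlock expectation.unlock.
  rewrite le_eqVlt; apply/orP; left; apply/eqP/eq_integral => t _ /=.
  rewrite /= powR_mulrn //.
  by rewrite real_normK ?num_real // expr2 /mu expectation.unlock.
have -> : X = ((X \- cst mu) \+ cst mu)%R by apply/funext => x /=; rewrite subrK.
by rewrite rpredD ?lee1n //= => _; rewrite Lfun_cst.
Qed.

Lemma variance_le_sqr_dev (X : T -> R) (s : R) : X \in Lfun P 2%:E ->
  'V_P[X] <= 'E_P[((X \- cst s) ^+ 2)%R].
Proof.
move=> X2.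
have Y2 : (X \- cst s)%R \in Lfun P 2%:E.
  by rewrite rpredB ?lee1n //= => _; rewrite Lfun_cst.
rewrite -(varianceB_cst_r s X2) varianceE //.
by rewrite -[leRHS]sube0 leeB // sqre_ge0.
Qed.

Lemma variance_ge_pointwise (X Y : T -> R) (alpha s K : R) :
  X \in Lfun P 2%:E -> measurable_fun setT Y -> (0 <= alpha)%R -> (0 <= K)%R ->
  (forall t, alpha * (X t - s) ^+ 2 <= (Y t - fine 'E_P[Y]) ^+ 2 + K)%R ->
  (alpha * fine 'V_P[X] - K)%:E <= 'V_P[Y].
Proof.
move=> X2 mY alpha0 K0 hXY.
set Z := (fun t => (Y t - fine 'E_P[Y]) ^+ 2)%R.
have mZ : measurable_fun setT Z.
  by apply: measurable_funX; apply: measurable_funB => //; exact: measurable_cst.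
have Z0 t : (0 <= Z t)%R by exact: sqr_ge0.
have Y2 : (X \- cst s)%R \in Lfun P 2%:E.
  by rewrite rpredB ?lee1n //= => _; rewrite Lfun_cst.
have VYE : 'V_P[Y] = 'E_P[Z] by rewrite /variance covariance.unlock.
have EZK : 'E_P[(Z \+ cst K)%R] = 'E_P[Z] + K%:E.
  rewrite !expectation.unlock /=.
  under eq_integral => t _ do rewrite EFinD.
  rewrite (ge0_integralD _ measurableT) //=.
  - by rewrite integral_cst //= probability_setT mule1.
  - by move=> t _; rewrite lee_fin.
  - exact/measurable_EFinP.
rewrite EFinB leeBlDr // VYE -EZK EFinM (fineK (variance_fin_num X2)).
apply: le_trans (_ : alpha%:E * 'E_P[((X \- cst s) ^+ 2)%R] <= _).
  by rewrite lee_wpmul2l ?lee_fin // variance_le_sqr_dev.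
rewrite -expectationZl; last exact: Lfun2_mul_Lfun1.
apply: expectation_le.
- have mX : measurable_fun setT X by move: X2; rewrite inE => /andP[]; rewrite inE.
  have mF : measurable_fun setT (X \- cst s)%R.
    by apply: measurable_funB => //; exact: measurable_cst.
  exact: (measurable_funM (measurable_funM mF mF) (measurable_cst alpha)).
- by apply: measurable_funD => //; exact: measurable_cst.
- by move=> t /=; apply: mulr_ge0 => //; exact: sqr_ge0.
- by move=> t /=; apply: addr_ge0.
- by apply: aeW => t /=; rewrite mulrC; exact: hXY.
Qed.
End finite_variance.

Lemma measurable_fun_comp_int (R : realType) (d : measure_display)
    (T : measurableType d) (B : T -> int) (h : int -> R) :
  measurable_fun setT (fun t => (B t)%:~R : R) -> measurable_fun setT (h \o B).
Proof.
move=> mB _ A mA.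
pose S := (\bigcup_(n in [set n : int | A (h n)]) [set (n%:~R : R)])%classic.
have mS : measurable S.
  apply: countable_measurable; first exact: measurable_set1.
  apply: bigcup_countable; first exact: countableP.
  by move=> n _; exact: countable1.
have := mB measurableT S mS.
congr measurable; apply/seteqP; split=> t /=.
  by move=> [_ [n An /= /eqP]]; rewrite eqr_int => /eqP ->.
by move=> [_ Ht]; split=> //; exists (B t).
Qed.

Theorem lemma3p2 (R : realType) (d : measure_display) (T : measurableType d)
  (P : probability T R) (c m : R) (f : int -> int) (B : T -> int) :
  0 < c -> 0 < m ->
  {homo f : i j / (i <= j)%R} ->
  (forall i j : int, (i < j)%R -> (f j - f i <= j - i)%R) ->
  (forall i j : int, i%:~R + m <= j%:~R ->
     c * (j - i)%:~R <= (f j - f i)%:~R) ->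
  measurable_fun setT (fun t => (B t)%:~R : R) ->
  (0 < 'V_P[fun t => (B t)%:~R])%E ->
  ('V_P[fun t => (B t)%:~R] < +oo)%E ->
  let v := fine 'V_P[fun t => (B t)%:~R] in
  ((c ^+ 2 * (1 - 2 * m / (c * Num.sqrt v)) * v)%:E
     <= 'V_P[fun t => (f (B t))%:~R])%E.
Proof.
move=> c_gt0 m_gt0 f_nondecr f_lip f_growth mB VB_gt0 VB_lty /=.
set v := fine _.
have c_le1 := growth_le1 m_gt0 f_lip f_growth.
have B2 := variance_lty_Lfun2 mB VB_lty.
have v_gt0 : 0 < v by rewrite -lte_fin fineK // ge0_fin_numE // ltW.
set sigma := Num.sqrt v.
have sigma_gt0 : 0 < sigma by rewrite sqrtr_gt0.
have v_sigma : v = sigma ^+ 2 by rewrite sqr_sqrtr // ltW.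
have [sigma_le_m | m_lt_sigma] := leP sigma m.
  apply: le_trans (variance_ge0 _ _); rewrite lee_fin.
  have q_ge1 : 1 <= 2 * m / (c * sigma).
    by rewrite ler_pdivlMr ?mulr_gt0 // mul1r; nra.
  by rewrite pmulr_lle0 // mulr_ge0_le0 ?sqr_ge0 // subr_le0.
set a := fine 'E_P[fun t => (f (B t))%:~R].
have [s track] := exists_level_preimage c_gt0 m_gt0 f_nondecr f_lip f_growth a.
have alpha_ge0 : 0 <= c ^+ 2 * (1 - m / sigma).
  by rewrite mulr_ge0 ?sqr_ge0 // subr_ge0 ler_pdivrMr // mul1r ltW.
have K_ge0 : 0 <= c ^+ 2 * m * sigma by rewrite !mulr_ge0 ?sqr_ge0 // ltW.
have pointwise t : c ^+ 2 * (1 - m / sigma) * ((B t)%:~R - s) ^+ 2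
    <= ((f (B t))%:~R - a) ^+ 2 + c ^+ 2 * m * sigma.
  exact: sqr_ge_of_norm_shift (ltW c_gt0) (ltW m_gt0) sigma_gt0 (track (B t)).
apply: le_trans (variance_ge_pointwise B2 (measurable_fun_comp_int (fun n => (f n)%:~R) mB)
  alpha_ge0 K_ge0 pointwise).
by rewrite lee_fin -/v v_sigma le_shifted_variance_bound.
Qed.
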